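(* Let $S$ be an AG-groupoid that satisfies both $a(bc)=(ab)(ca)$ and $(ab)c=(ca)(bc)$ for all $a,b,c\in S$. Then $S$ is a semigroup, i.e. $a(bc)=(ab)c$ for all $a,b,c\in S$.
   Context: A groupoid is a set $S$ with a binary operation written as juxtaposition. An AG-groupoid is a groupoid satisfying the left invertive law $(ab)c=(cb)a$ for all $a,b,c\in S$. Such an $S$ satisfying both identities in the claim (left abelian distributive and right abelian distributive) is called an AD-AG-groupoid. *)

Definition left_invertive {S : Type} (op : S -> S -> S) : Prop :=
  forall a b c : S, op (op a b) c = op (op c b) a.

Definition is_AG_groupoid {S : Type} (op : S -> S -> S) : Prop :=
  left_invertive op.

Definition left_abelian_distributive {S : Type} (op : S -> S -> S) : Prop :=
  forall a b c : S, op a (op b c) = op (op a b) (op c a).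

Definition right_abelian_distributive {S : Type} (op : S -> S -> S) : Prop :=
  forall a b c : S, op (op a b) c = op (op c a) (op b c).

Definition associative_op {S : Type} (op : S -> S -> S) : Prop :=
  forall a b c : S, op a (op b c) = op (op a b) c.


(* Every AG-groupoid is medial. The two abelian distributive laws share the
   right-hand side (ab)(ca), so a(bc) = (bc)a. Hence
   (ab)c = (cb)a = a(cb) = (ac)(ba) = (ab)(ca) = a(bc), the fourth step by mediality. *)

Section AbelianDistributiveAG.

Context {S : Type} {op : S -> S -> S}.

Lemma left_invertive_medial :
  left_invertive op ->
  forall a b c d : S, op (op a b) (op c d) = op (op a c) (op b d).
Proof.
  intros LI a b c d.
  rewrite (LI a b (op c d)), (LI c d b), (LI (op b d) c a).
  reflexivity.
Qed.

Lemma abelian_distributive_comm :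
  left_abelian_distributive op -> right_abelian_distributive op ->
  forall a b c : S, op a (op b c) = op (op b c) a.
Proof.
  intros LAD RAD a b c.
  rewrite (RAD b c a), (LAD a b c).
  reflexivity.
Qed.

End AbelianDistributiveAG.

Theorem mainTheorem7 (S : Type) (op : S -> S -> S) :
  is_AG_groupoid op ->
  left_abelian_distributive op ->
  right_abelian_distributive op ->
  associative_op op.
Proof.
  intros LI LAD RAD a b c.
  rewrite (LI a b c), <- (abelian_distributive_comm LAD RAD a c b), (LAD a c b),
    (left_invertive_medial LI a c b a), (LAD a b c).
  reflexivity.
Qed.
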